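(* Let $I$ be the tridendriform ideal of $\mathcal{A}$ generated by $\{x\cdot y:x,y\in\mathcal A^+\}$, let $\overline{\Delta}$ be the coproduct induced by $\Delta$ on $\mathcal{A}/I$ and write $\bar x$ for the class of $x$. Define recursively, for every planar binary tree $t$, an element $\Delta_{LR}(t)\in(\mathcal A/I)\otimes(\mathcal A/I)$ of the form $\sum_{(X,s)}X\otimes\bar s$ (finite sum, $X\in\mathcal A/I$, $s$ binary trees) by $\Delta_{LR}(|)=\bar|\otimes\bar|$ and, for $t=t_1\vee t_2$ with $\Delta_{LR}(t_1)=\sum_{(X,s)}X\otimes\bar s$ and $\Delta_{LR}(t_2)=\sum_{(Z,r)}Z\otimes\bar r$, $$\Delta_{LR}(t)=\sum_{(X,s),(Z,r)}(X*Z)\otimes\overline{s\vee r}+\bar t\otimes\bar|.$$ Then $\overline{\Delta}(\bar t)=\Delta_{LR}(t)$ for every planar binary tree $t$ (this is the Loday–Ronco coproduct).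
   Context: Trees: planar rooted trees in which every internal vertex has at least two children; the root vertex hangs from a trunk edge; leaves are edges without upper vertex; $|$ is the one-leaf tree; binary trees are those in which every internal vertex has exactly two children. $\mathcal A$ is the $\mathbb K$-span of all trees, $\mathcal A^+$ that of trees $\neq|$. Products: $x_0\vee\cdots\vee x_k$ ($k\ge1$) grafts trees left to right on a new root; for $x=x^{(0)}\vee\cdots\vee x^{(k)}$, $y=y^{(0)}\vee\cdots\vee y^{(l)}$: $x\prec y=x^{(0)}\vee\cdots\vee x^{(k-1)}\vee(x^{(k)}*y)$, $x\cdot y=x^{(0)}\vee\cdots\vee x^{(k-1)}\vee(x^{(k)}*y^{(0)})\vee y^{(1)}\vee\cdots\vee y^{(l)}$, $x\succ y=(x*y^{(0)})\vee y^{(1)}\vee\cdots\vee y^{(l)}$, $*=\prec+\cdot+\succ$, $|*z=z*|=z$; for $a\in\mathcal A^+$: $|\prec a=0$, $a\prec|=a$, $|\succ a=a$, $a\succ|=0$, $|\cdot a=a\cdot|=0$. A tridendriform ideal is a subspace $J$ with $x\ltimes y\in J$ whenever $x\in J$ or $y\in J$; $*$ descends to $\mathcal A/I$. Coproduct: $\Delta(|)=|\otimes|$, $\Delta(t)=\sum_c G^c(t)\otimes P^c(t)$ over admissible cuts of $t$ (internal edges join two internal vertices; a cut is a nonempty set of internal edges, plus the empty and total (below the root) cuts; admissible if every root-to-leaf path meets at most one chosen edge; $P^c(t)$ the component containing the root, $G^c(t)$ the $*$-product of the cut-off trees from left to right; empty cut: $P^c=t,G^c=|$; total cut: $P^c=|,G^c=t$).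 One has $\Delta(I)\subseteq I\otimes\mathcal A+\mathcal A\otimes I$, so $\Delta$ induces $\overline\Delta:\mathcal A/I\to(\mathcal A/I)\otimes(\mathcal A/I)$. *)

From HB Require Import structures.
From mathcomp Require Import all_boot all_order all_algebra.
From mathcomp Require Import finmap.
From mathcomp.multinomials Require Import monalg.

Set Implicit Arguments.
Unset Strict Implicit.
Unset Printing Implicit Defensive.

Import GRing.Theory.
Local Open Scope ring_scope.

(* Planar rooted trees in which every internal vertex has >= 2 children.
   [Leaf] is the one-leaf tree |; [Node t0 t1 ts] is t0 \/ t1 \/ ... (the
   grafting of the trees t0 :: t1 :: ts, left to right, on a new root).   *)
Inductive tree := Leaf | Node of tree & tree & seq tree.

Fixpoint enc_tree (t : tree) : GenTree.tree unit :=
  match t with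
  | Leaf => GenTree.Leaf tt
  | Node a b r => GenTree.Node 0 (enc_tree a :: enc_tree b :: map enc_tree r)
  end.

Fixpoint dec_tree (g : GenTree.tree unit) : tree :=
  match g with
  | GenTree.Node _ (a :: b :: r) => Node (dec_tree a) (dec_tree b) (map dec_tree r)
  | _ => Leaf
  end.

Lemma enc_treeK : cancel enc_tree dec_tree.
Proof.
rewrite /cancel; fix IH 1; case => [|a b r] //=; rewrite !IH; congr Node.
elim: r => //= x r IHr; by rewrite IH IHr.
Qed.

HB.instance Definition _ := Countable.copy tree (can_type enc_treeK).

Definition mk (l : seq tree) : tree :=
  match l with a :: b :: r => Node a b r | _ => Leaf end.

Fixpoint tsize (t : tree) : nat :=
  match t with
  | Leaf => 1
  | Node a b r => (tsize a + tsize b + sumn (map tsize r)).+1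
  end.

Inductive btree := BLeaf | BNode of btree & btree.

Fixpoint emb (b : btree) : tree :=
  match b with BLeaf => Leaf | BNode l r => Node (emb l) (emb r) [::] end.

Section Algebra.
Variable K : fieldType.

(* The K-span A of all trees, and A (x) A (span of pairs of trees). *)
Definition A := {malg K[tree]}.
Definition AA := {malg K[(tree * tree)%type]}.

Definition tr (t : tree) : A := mkmalgU t 1.

Definition lin1 (f : tree -> A) (x : A) : A :=
  \sum_(a <- msupp x) x@_a *: f a.
Definition lin2 (f : tree -> tree -> A) (x y : A) : A :=
  \sum_(a <- msupp x) \sum_(b <- msupp y) (x@_a * y@_b) *: f a b.

Definition tens (x y : A) : AA :=
  \sum_(a <- msupp x) \sum_(b <- msupp y) (x@_a * y@_b) *: (mkmalgU (a, b) 1 : AA).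

Definition graft (pre : seq tree) (v : A) (post : seq tree) : A :=
  lin1 (fun t => tr (mk (pre ++ t :: post))) v.

(* The product * = < + . + > on trees, by recursion (with fuel
   n >= tsize x + tsize y, which is always enough). *)
Fixpoint starF (n : nat) (x y : tree) : A :=
  match n with
  | 0 => 0
  | n'.+1 =>
    match x, y with
    | Leaf, _ => tr y
    | _, Leaf => tr x
    | Node x0 x1 xs, Node y0 y1 ys =>
        graft (belast x0 (x1 :: xs)) (starF n' (last x1 xs) y) [::]
      + graft (belast x0 (x1 :: xs)) (starF n' (last x1 xs) y0) (y1 :: ys)
      + graft [::] (starF n' x y0) (y1 :: ys)
    end
  end.

Definition star (x y : tree) : A := starF (tsize x + tsize y) x y.

(* x < y,  x . y,  x > y  on trees (conventions for | as in the paper;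
   the value on (|,|) is never used) *)
Definition precT (x y : tree) : A :=
  match x, y with
  | Leaf, _ => 0
  | Node _ _ _, Leaf => tr x
  | Node x0 x1 xs, Node _ _ _ =>
      graft (belast x0 (x1 :: xs)) (star (last x1 xs) y) [::]
  end.

Definition dotT (x y : tree) : A :=
  match x, y with
  | Node x0 x1 xs, Node y0 y1 ys =>
      graft (belast x0 (x1 :: xs)) (star (last x1 xs) y0) (y1 :: ys)
  | _, _ => 0
  end.

Definition succT (x y : tree) : A :=
  match x, y with
  | _, Leaf => 0
  | Leaf, Node _ _ _ => tr y
  | Node _ _ _, Node y0 y1 ys => graft [::] (star x y0) (y1 :: ys)
  end.

Definition precA := lin2 precT.
Definition dotA := lin2 dotT.
Definition succA := lin2 succT.
Definition starA := lin2 star.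

Definition subspace (V : lmodType K) (J : V -> Prop) :=
  J 0 /\ forall (c : K) (u v : V), J u -> J v -> J (c *: u + v).

Definition tri_ideal (J : A -> Prop) :=
  subspace J /\
  forall x y : A, J x \/ J y -> [/\ J (precA x y), J (dotA x y) & J (succA x y)].

Definition Aplus (x : A) := x@_Leaf = 0.

Definition Iideal (x : A) : Prop :=
  forall J : A -> Prop, tri_ideal J ->
    (forall u v : A, Aplus u -> Aplus v -> J (dotA u v)) -> J x.

(* I (x) A + A (x) I, the kernel of A (x) A -> (A/I) (x) (A/I) *)
Definition Iker (w : AA) : Prop :=
  forall J : AA -> Prop, subspace J ->
    (forall x y : A, Iideal x -> J (tens x y)) ->
    (forall x y : A, Iideal y -> J (tens x y)) -> J w.

(* For a tree t, [cuts t] enumerates, once each, the sets of internal edges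
   of t meeting every root-to-leaf path at most once (including the empty
   set): each entry is (list of cut-off trees from left to right, the root
   component P^c(t)). *)
Fixpoint prod_opts (os : seq (seq (seq tree * tree))) : seq (seq tree * seq tree) :=
  match os with
  | [::] => [:: ([::], [::])]
  | o :: rest =>
      flatten [seq [seq (gp.1 ++ gps.1, gp.2 :: gps.2) | gps <- prod_opts rest]
              | gp <- o]
  end.

Fixpoint cuts (t : tree) : seq (seq tree * tree) :=
  match t with
  | Leaf => [:: ([::], Leaf)]
  | Node a b r =>
      let opts := fun c : tree =>
        (if c is Leaf then [::] else [:: ([:: c], Leaf)]) ++ cuts c in
      [seq (gps.1, mk gps.2) | gps <- prod_opts (opts a :: opts b :: map opts r)]
  end.

Definition star_list (gs : seq tree) : A :=
  foldr (fun g acc => starA (tr g) acc) (tr Leaf) gs.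

Definition Delta (t : tree) : AA :=
  match t with
  | Leaf => tens (tr Leaf) (tr Leaf)
  | Node _ _ _ =>
      \sum_(c <- cuts t) tens (star_list c.1) (tr c.2)
      + tens (tr t) (tr Leaf)
  end.

(* ---- Delta_LR on binary trees, as a list of pairs (X, s) standing for
   sum X (x) s-bar, where X is given by a representative in A ---- *)
Fixpoint LRlist (t : btree) : seq (A * btree) :=
  match t with
  | BLeaf => [:: (tr Leaf, BLeaf)]
  | BNode t1 t2 =>
      [seq (starA xs.1 zr.1, BNode xs.2 zr.2) | xs <- LRlist t1, zr <- LRlist t2]
      ++ [:: (tr (emb t), BLeaf)]
  end.

Definition DeltaLR (t : btree) : AA :=
  \sum_(p <- LRlist t) tens p.1 (tr (emb p.2)).

End Algebra.

(* For a binary tree t = t1 \/ t2, a non-total admissible cut of t chooses, for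
   each child, either the edge above it (if the child is not a leaf) or a
   (possibly empty) admissible cut inside it.  The cut-off trees are multiplied
   from left to right, so by associativity of * their product is the product of
   the contributions of the two halves.  Hence Delta satisfies
   Delta(t1 \/ t2) = sum (X * Z) (x) (s \/ r) + t (x) |, the recursion defining
   Delta_LR, already in A (x) A, before passing to A/I.

   Associativity of * follows, by induction on the total size, from the seven
   tridendriform relations on trees, which are computed by viewing all the
   products as multilinear graftings. *)

From HB Require Import structures.
From mathcomp Require Import all_boot all_algebra finmap zify.
From mathcomp.multinomials Require Import monalg.
From Pilot Require Import Defs.

Set Implicit Arguments.
Unset Strict Implicit.
Unset Printing Implicit Defensive.
Import GRing.Theory.
Local Open Scope ring_scope.

Section LinearExtension.
Variable R : comNzRingType.

Section OneVariable.
Variables (T : choiceType) (V : lmodType R).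
Implicit Types (f g : T -> V) (x : {malg R[T]}).

Definition linext f x : V := \sum_(a <- msupp x) x@_a *: f a.

Lemma linextEw f x (D : {fset T}) :
  (msupp x `<=` D)%fset -> linext f x = \sum_(a <- D) x@_a *: f a.
Proof.
move=> le; rewrite /linext (big_fset_incl _ le) // => a _ /mcoeff_outdom ->.
by rewrite scale0r.
Qed.

Lemma linext_is_linear f : linear (linext f).
Proof.
move=> c u v; pose D := (msupp u `|` msupp v)%fset.
have leD : (msupp (c *: u + v) `<=` D)%fset.
  by rewrite (fsubset_trans (msuppD_le _ _)) // fsetSU // msuppZ_le.
rewrite (linextEw _ leD) (@linextEw _ u D) ?fsubsetUl // (@linextEw _ v D) ?fsubsetUr //.
rewrite scaler_sumr -big_split; apply: eq_bigr => a _ /=.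
by rewrite mcoeffD mcoeffZ scalerDl scalerA.
Qed.

HB.instance Definition _ f :=
  GRing.isLinear.Build R {malg R[T]} V *:%R (linext f) (linext_is_linear f).

Lemma linext1U f a : linext f << a >> = f a.
Proof. by rewrite (linextEw _ msuppU_le) big_seq_fset1 mcoeffUU scale1r. Qed.

Lemma eq_linext f g : f =1 g -> linext f =1 linext g.
Proof. by move=> fg x; apply: eq_bigr => a _; rewrite fg. Qed.

Lemma linext_addf f g x : linext (f \+ g) x = linext f x + linext g x.
Proof. by rewrite -big_split; apply: eq_bigr => a _; rewrite scalerDr. Qed.

End OneVariable.

Lemma linext_comp (T : choiceType) (V W : lmodType R) (F : {linear V -> W})
    (f : T -> V) (x : {malg R[T]}) :
  F (linext f x) = linext (F \o f) x.
Proof. by rewrite linear_sum; apply: eq_bigr => a _; rewrite linearZ. Qed.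

Lemma linext_linext (T1 T2 : choiceType) (V : lmodType R) (g : T2 -> V)
    (f : T1 -> {malg R[T2]}) (x : {malg R[T1]}) :
  linext g (linext f x) = linext (fun a => linext g (f a)) x.
Proof. exact: linext_comp. Qed.

Lemma linext_monalg (T : choiceType) (x : {malg R[T]}) :
  linext (fun a => << a >>) x = x.
Proof.
rewrite [RHS]monalgE; apply: eq_bigr => a _.
by apply/malgP => b; rewrite mcoeffZ !mcoeffU mulr_natr.
Qed.

Section TwoVariables.
Variables (T1 T2 : choiceType) (V : lmodType R).
Implicit Types (f : T1 -> T2 -> V) (x : {malg R[T1]}) (y : {malg R[T2]}).

Lemma linext_swap f x y :
  linext (fun a => linext (f a) y) x = linext (fun b => linext (f^~ b) x) y.
Proof.
rewrite /linext; under eq_bigr do rewrite scaler_sumr.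
rewrite exchange_big /=; apply: eq_bigr => b _; rewrite scaler_sumr.
by apply: eq_bigr => a _; rewrite !scalerA mulrC.
Qed.

Definition linext2 f x y : V := linext (fun a => linext (f a) y) x.

Lemma linext2Er f x y : linext2 f x y = linext (fun b => linext (f^~ b) x) y.
Proof. exact: linext_swap. Qed.

Lemma linext2_is_linear f x : linear (linext2 f x).
Proof. by move=> c u v; rewrite !linext2Er linearP. Qed.

HB.instance Definition _ f x :=
  GRing.isLinear.Build R {malg R[T2]} V *:%R (linext2 f x) (linext2_is_linear f x).

Lemma linext2U f a y : linext2 f << a >> y = linext (f a) y.
Proof. exact: linext1U. Qed.

Lemma linext2_U f x b : linext2 f x << b >> = linext (f^~ b) x.
Proof. by rewrite linext2Er linext1U. Qed.

Lemma linext2UU f a b : linext2 f << a >> << b >> = f a b.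
Proof. by rewrite linext2U linext1U. Qed.

Lemma linext2_linextl (T : choiceType) f (g : T -> {malg R[T1]}) (u : {malg R[T]}) y :
  linext2 f (linext g u) y = linext (fun a => linext2 f (g a) y) u.
Proof. exact: linext_comp. Qed.

Lemma linext2_linextr (T : choiceType) f (g : T -> {malg R[T2]}) x (v : {malg R[T]}) :
  linext2 f x (linext g v) = linext (fun b => linext2 f x (g b)) v.
Proof. exact: linext_comp. Qed.

Lemma linext2_suml (I : Type) (s : seq I) f (u : I -> {malg R[T1]}) y :
  linext2 f (\sum_(i <- s) u i) y = \sum_(i <- s) linext2 f (u i) y.
Proof. exact: linear_sum. Qed.

End TwoVariables.

End LinearExtension.

Arguments Defs.tsize : simpl never.

Section Star.
Variable K : fieldType.
Local Notation A := (A K).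
Local Notation tr := (tr K).
Local Notation star := (star K).
Local Notation starF := (starF K).
Local Notation precT := (precT K).
Local Notation dotT := (dotT K).
Local Notation succT := (succT K).
(* [x ≺ y], [x · y], [x ≻ y] and [x ⋆ y] are [precA x y], ..., [starA x y] with
   [lin2] exposed, so that the lemmas about [lin2] rewrite them. *)
Local Notation "x ≺ y" := (lin2 precT x y) (at level 40, left associativity).
Local Notation "x · y" := (lin2 dotT x y) (at level 40, left associativity).
Local Notation "x ≻ y" := (lin2 succT x y) (at level 40, left associativity).
Local Notation "x ⋆ y" := (lin2 star x y) (at level 40, left associativity).

Lemma tsizeE a b r : tsize (Node a b r) = (tsize a + tsize b + sumn (map tsize r)).+1.
Proof. by []. Qed.

Lemma tsize_gt0 t : (0 < tsize t)%N.
Proof. by case: t. Qed.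

Lemma tsize_last x1 xs : (tsize (last x1 xs) <= tsize x1 + sumn (map tsize xs))%N.
Proof. by elim: xs x1 => [|x2 xs IH] x1 /=; [rewrite addn0 | have := IH x2; lia]. Qed.

Lemma starF_fuel n x y : (tsize x + tsize y <= n)%N -> starF n x y = star x y.
Proof.
rewrite /Defs.star; move: {2 4}(tsize x + tsize y)%N (leqnn (tsize x + tsize y)).
elim: n x y => [|n IH] x y [|m] hm hn; try by have := tsize_gt0 x; lia.
case: x hm hn => [|x0 x1 xs]; case: y => [|y0 y1 ys]; [done.. | rewrite /= !tsizeE => hm hn].
have := tsize_last x1 xs; have := tsize_gt0 y1 => *.
by rewrite (IH _ _ m) ?(IH _ y0 m) ?tsizeE //=; lia.
Qed.

Lemma star_leafl y : star Leaf y = tr y.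
Proof. by rewrite /Defs.star; case: (tsize y). Qed.

Lemma star_leafr x : star x Leaf = tr x.
Proof. by rewrite /Defs.star; case: x => //= *; rewrite addn1. Qed.

Lemma star_split a b : (a != Leaf) || (b != Leaf) ->
  star a b = precT a b + dotT a b + succT a b.
Proof.
case: a => [|x0 x1 xs]; case: b => [|y0 y1 ys] ab_node.
- by [].
- by rewrite star_leafl /= !add0r.
- by rewrite star_leafr /= !addr0.
rewrite {1}/Defs.star tsizeE -addSn /=.
by have := tsize_last x1 xs; have := tsize_gt0 y1 => *; rewrite !starF_fuel ?tsizeE //; lia.
Qed.

Section Lin2.
Variable f : tree -> tree -> A.
Implicit Types x y : A.

Lemma lin2E x y : lin2 f x y = linext2 f x y.
Proof.
rewrite /lin2 /linext2 /linext; apply: eq_bigr => a _; rewrite scaler_sumr.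
by apply: eq_bigr => b _; rewrite scalerA.
Qed.

Lemma lin2U a y : lin2 f (tr a) y = linext (f a) y.
Proof. by rewrite lin2E linext2U. Qed.

Lemma lin2_U x b : lin2 f x (tr b) = linext (f^~ b) x.
Proof. by rewrite lin2E linext2_U. Qed.

Lemma lin2UU a b : lin2 f (tr a) (tr b) = f a b.
Proof. by rewrite lin2E linext2UU. Qed.

Lemma lin2_linextl (g : tree -> A) x y :
  lin2 f (linext g x) y = linext (fun a => lin2 f (g a) y) x.
Proof. by rewrite lin2E linext2_linextl; apply: eq_linext => a; rewrite lin2E. Qed.

Lemma lin2_linextr (g : tree -> A) x y :
  lin2 f x (linext g y) = linext (fun b => lin2 f x (g b)) y.
Proof. by rewrite lin2E linext2_linextr; apply: eq_linext => b; rewrite lin2E. Qed.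

Lemma lin2Dl x1 x2 y : lin2 f (x1 + x2) y = lin2 f x1 y + lin2 f x2 y.
Proof. by rewrite !lin2E /linext2 linearD. Qed.

Lemma lin2Dr x y1 y2 : lin2 f x (y1 + y2) = lin2 f x y1 + lin2 f x y2.
Proof. by rewrite !lin2E linearD. Qed.

End Lin2.

Lemma linext_tr (x : A) : linext tr x = x.
Proof. exact: linext_monalg. Qed.

(* [graftm pre vs] grafts the trees [pre] followed by the vectors [vs] on a new
   root, multilinearly in [vs]; as [mk], it gives [|] for fewer than two branches. *)
Fixpoint graftm (pre : seq tree) (vs : seq A) : A :=
  if vs is v :: vs' then linext (fun a => graftm (rcons pre a) vs') v else tr (mk pre).

Definition graftv (vs : seq A) : A := graftm [::] vs.

Lemma graftm_nil pre : graftm pre [::] = tr (mk pre).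
Proof. by []. Qed.

Lemma graftm_cons pre v vs :
  graftm pre (v :: vs) = linext (fun a => graftm (rcons pre a) vs) v.
Proof. by []. Qed.

Arguments graftm : simpl never.

Lemma graftm_trees pre q vs : graftm pre (map tr q ++ vs) = graftm (pre ++ q) vs.
Proof.
elim: q pre => [|a q IH] pre /=; first by rewrite cats0.
by rewrite graftm_cons linext1U IH cat_rcons.
Qed.

Lemma graftmE pre vs : graftm pre vs = graftv (map tr pre ++ vs).
Proof. by rewrite /graftv graftm_trees. Qed.

Lemma graftm_tr pre q : graftm pre (map tr q) = tr (mk (pre ++ q)).
Proof. by rewrite -[map tr q]cats0 graftm_trees. Qed.

Lemma graftE pre v post : graft pre v post = graftm pre (v :: map tr post).
Proof. by apply: eq_linext => a; rewrite -cat_rcons -graftm_tr. Qed.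

Lemma precT_node x0 x1 xs z :
  precT (Node x0 x1 xs) z = graft (belast x0 (x1 :: xs)) (star (last x1 xs) z) [::].
Proof.
case: z => [|z0 z1 zs] //=.
by rewrite star_leafr graftE graftm_cons linext1U /= graftm_nil -lastI.
Qed.

Lemma succT_node a z0 z1 zs : succT a (Node z0 z1 zs) = graft [::] (star a z0) (z1 :: zs).
Proof. by case: a => [|a0 a1 as_] //=; rewrite star_leafl graftE -map_cons graftm_tr. Qed.

Lemma mk_rcons pre a : pre != [::] -> exists x0 x1 xs,
  [/\ mk (rcons pre a) = Node x0 x1 xs, belast x0 (x1 :: xs) = pre & last x1 xs = a].
Proof.
case: pre => // p0 [|p1 ps] _; first by exists p0, a, [::].
by exists p0, p1, (rcons ps a); rewrite /= belast_rcons last_rcons.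
Qed.

Lemma precT_mk pre a z : pre != [::] ->
  precT (mk (rcons pre a)) z = graft pre (star a z) [::].
Proof. by move=> /(mk_rcons a) [x0 [x1 [xs [-> <- <-]]]]; rewrite precT_node. Qed.

Lemma dotT_mk pre a z0 z1 zs : pre != [::] ->
  dotT (mk (rcons pre a)) (Node z0 z1 zs) = graft pre (star a z0) (z1 :: zs).
Proof. by move=> /(mk_rcons a) [x0 [x1 [xs [-> <- <-]]]]. Qed.

Lemma precA_graftm_tr z vs v pre : pre != [::] ->
  graftm pre (rcons vs v) ≺ tr z = graftm pre (rcons vs (v ⋆ tr z)).
Proof.
elim: vs pre => [|w vs IH] pre pre_neq0; rewrite /= !graftm_cons [LHS]lin2_linextl.
  rewrite lin2_U linext_linext; apply: eq_linext => a /=.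
  by rewrite lin2UU precT_mk // graftE; apply: eq_linext => b.
by apply: eq_linext => a; apply: IH; rewrite -size_eq0 size_rcons.
Qed.

Lemma dotA_graftm_node z0 z1 zs vs v pre : pre != [::] ->
  graftm pre (rcons vs v) · tr (Node z0 z1 zs) =
  graftm pre (vs ++ v ⋆ tr z0 :: map tr (z1 :: zs)).
Proof.
elim: vs pre => [|w vs IH] pre pre_neq0; rewrite /= !graftm_cons [LHS]lin2_linextl.
  rewrite lin2_U linext_linext; apply: eq_linext => a /=.
  by rewrite lin2UU dotT_mk // graftE graftm_cons.
by apply: eq_linext => a; apply: IH; rewrite -size_eq0 size_rcons.
Qed.

Lemma graftv_cons v vs : graftv (v :: vs) = linext (fun a => graftm [:: a] vs) v.
Proof. by []. Qed.

Lemma precA_graftv_tr z w vs v :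
  graftv (w :: rcons vs v) ≺ tr z = graftv (w :: rcons vs (v ⋆ tr z)).
Proof.
by rewrite !graftv_cons [LHS]lin2_linextl; apply: eq_linext => a; apply: precA_graftm_tr.
Qed.

Lemma dotA_graftv_node z0 z1 zs w vs v :
  graftv (w :: rcons vs v) · tr (Node z0 z1 zs) =
  graftv (w :: vs ++ v ⋆ tr z0 :: map tr (z1 :: zs)).
Proof.
by rewrite !graftv_cons [LHS]lin2_linextl; apply: eq_linext => a; apply: dotA_graftm_node.
Qed.

Lemma succA_node_graftm x0 x1 xs vs a pre (x := Node x0 x1 xs) :
  (0 < size pre + size vs)%N ->
  tr x ≻ graftm (a :: pre) vs = linext (fun b => graftm (b :: pre) vs) (star x a).
Proof.
elim: vs pre => [|v vs IH] pre hs.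
  by case: pre hs => [|p0 ps] //= _; rewrite graftm_nil [LHS]lin2UU.
rewrite graftm_cons [LHS]lin2_linextr.
under eq_linext do rewrite IH ?size_rcons ?addSn //.
by rewrite linext_swap.
Qed.

Lemma succA_node_graftv x0 x1 xs v vs (x := Node x0 x1 xs) : vs != [::] ->
  tr x ≻ graftv (v :: vs) = graftv (tr x ⋆ v :: vs).
Proof.
move=> vs_neq0; rewrite !graftv_cons [LHS]lin2_linextr lin2U linext_linext.
by apply: eq_linext => a; rewrite succA_node_graftm // lt0n size_eq0.
Qed.

Lemma dotA_node_graftm x0 x1 xs vs a pre (x := Node x0 x1 xs) :
  (0 < size pre + size vs)%N ->
  tr x · graftm (a :: pre) vs =
  linext (fun b => graftm (belast x0 (x1 :: xs) ++ b :: pre) vs) (star (last x1 xs) a).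
Proof.
elim: vs pre => [|v vs IH] pre hs.
  by case: pre hs => [|p0 ps] //= _; rewrite graftm_nil [LHS]lin2UU.
rewrite graftm_cons [LHS]lin2_linextr.
under eq_linext do rewrite IH ?size_rcons ?addSn //.
by rewrite linext_swap; apply: eq_linext => b; apply: eq_linext => c; rewrite rcons_cat.
Qed.

Lemma dotA_node_graftv x0 x1 xs v vs (x := Node x0 x1 xs) : vs != [::] ->
  tr x · graftv (v :: vs) =
  graftv (map tr (belast x0 (x1 :: xs)) ++ tr (last x1 xs) ⋆ v :: vs).
Proof.
move=> vs_neq0; rewrite graftv_cons /graftv graftm_trees graftm_cons.
rewrite [LHS]lin2_linextr lin2U linext_linext; apply: eq_linext => a.
by rewrite dotA_node_graftm ?lt0n ?size_eq0 //; apply: eq_linext => b; rewrite cats1.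
Qed.

Lemma succA_node u z0 z1 zs :
  u ≻ tr (Node z0 z1 zs) = graftv (u ⋆ tr z0 :: map tr (z1 :: zs)).
Proof.
rewrite [LHS]lin2_U graftv_cons lin2_U linext_linext; apply: eq_linext => a.
by rewrite /= succT_node graftE graftm_cons; apply: eq_linext => b; rewrite graftm_tr.
Qed.

Lemma precA_node x0 x1 xs v (x := Node x0 x1 xs) :
  tr x ≺ v = graftv (map tr (belast x0 (x1 :: xs)) ++ [:: tr (last x1 xs) ⋆ v]).
Proof.
rewrite [LHS]lin2U /graftv graftm_trees graftm_cons lin2U linext_linext.
apply: eq_linext => a; rewrite precT_node graftE graftm_cons.
by apply: eq_linext.
Qed.

Lemma precT_graftv x0 x1 xs y : precT (Node x0 x1 xs) y =
  graftv (tr x0 :: rcons (map tr (belast x1 xs)) (star (last x1 xs) y)).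
Proof. by rewrite precT_node graftE graftmE /= cats1. Qed.

Lemma dotT_graftv x0 x1 xs y0 y1 ys : dotT (Node x0 x1 xs) (Node y0 y1 ys) =
  graftv (tr x0 :: map tr (belast x1 xs) ++ star (last x1 xs) y0 :: map tr (y1 :: ys)).
Proof. by rewrite /= graftE graftmE. Qed.

Lemma succT_graftv x y0 y1 ys :
  succT x (Node y0 y1 ys) = graftv (star x y0 :: map tr (y1 :: ys)).
Proof. by rewrite succT_node graftE. Qed.

Lemma map_tr_rcons y1 ys :
  map tr (y1 :: ys) = rcons (map tr (belast y1 ys)) (tr (last y1 ys)).
Proof. by rewrite -map_rcons -lastI. Qed.

Lemma starA_splitr u z0 z1 zs (z := Node z0 z1 zs) :
  u ⋆ tr z = u ≺ tr z + u · tr z + u ≻ tr z.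
Proof. by rewrite !lin2_U -!linext_addf; apply: eq_linext => a; rewrite /= star_split ?orbT. Qed.

Lemma starA_splitl x0 x1 xs v (x := Node x0 x1 xs) :
  tr x ⋆ v = tr x ≺ v + tr x · v + tr x ≻ v.
Proof. by rewrite !lin2U -!linext_addf; apply: eq_linext => a; rewrite /= star_split. Qed.

Section Tridendriform.
Variables (x0 x1 y0 y1 z0 z1 : tree) (xs ys zs : seq tree).
Local Notation x := (Node x0 x1 xs).
Local Notation y := (Node y0 y1 ys).
Local Notation z := (Node z0 z1 zs).

Lemma dot_prec : dotT x y ≺ tr z = tr x · precT y z.
Proof.
rewrite dotT_graftv map_tr_rcons -rcons_cons -rcons_cat precA_graftv_tr lin2UU.
rewrite precT_graftv dotA_node_graftv ?lin2UU; last by rewrite -size_eq0 size_rcons.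
by rewrite /= rcons_cat rcons_cons.
Qed.

Lemma dot_dot : dotT x y · tr z = tr x · dotT y z.
Proof.
rewrite dotT_graftv map_tr_rcons -rcons_cons -rcons_cat dotA_graftv_node lin2UU.
rewrite dotT_graftv dotA_node_graftv ?lin2UU; last by rewrite -size_eq0 size_cat addnS.
by rewrite /= -catA.
Qed.

Lemma succ_prec : succT x y ≺ tr z = tr x ≻ precT y z.
Proof.
rewrite succT_graftv map_tr_rcons precA_graftv_tr lin2UU.
by rewrite precT_graftv succA_node_graftv ?lin2UU // -size_eq0 size_rcons.
Qed.

Lemma succ_dot : succT x y · tr z = tr x ≻ dotT y z.
Proof.
rewrite succT_graftv map_tr_rcons dotA_graftv_node lin2UU.
by rewrite dotT_graftv succA_node_graftv ?lin2UU // -size_eq0 size_cat addnS.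
Qed.

Lemma prec_prec : star (last x1 xs) y ⋆ tr z = tr (last x1 xs) ⋆ star y z ->
  precT x y ≺ tr z = tr x ≺ star y z.
Proof. by move=> assoc_yz; rewrite precT_graftv precA_graftv_tr assoc_yz precA_node /= cats1. Qed.

Lemma prec_dot : star (last x1 xs) y ⋆ tr z0 = tr (last x1 xs) ⋆ star y z0 ->
  precT x y · tr z = tr x · succT y z.
Proof.
by move=> assoc_yz0; rewrite precT_graftv dotA_graftv_node assoc_yz0 succT_graftv dotA_node_graftv.
Qed.

Lemma star_succ : star x y ⋆ tr z0 = tr x ⋆ star y z0 ->
  star x y ≻ tr z = tr x ≻ succT y z.
Proof. by move=> assoc_xyz0; rewrite succA_node assoc_xyz0 succT_graftv succA_node_graftv. Qed.

Lemma star_assoc_node :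
    star (last x1 xs) y ⋆ tr z = tr (last x1 xs) ⋆ star y z ->
    star (last x1 xs) y ⋆ tr z0 = tr (last x1 xs) ⋆ star y z0 ->
    star x y ⋆ tr z0 = tr x ⋆ star y z0 ->
  star x y ⋆ tr z = tr x ⋆ star y z.
Proof.
move=> assoc_yz assoc_yz0 assoc_xyz0.
rewrite starA_splitr starA_splitl (star_succ assoc_xyz0) -(prec_prec assoc_yz).
move: dot_prec dot_dot succ_prec succ_dot (prec_dot assoc_yz0).
rewrite (@star_split x y isT) (@star_split y z isT).
(* Abstract the operations and their arguments: rewriting in the concrete
   terms makes the unifier unfold the tree products. *)
have := lin2Dl precT; have := lin2Dl dotT; have := lin2Dr dotT; have := lin2Dr succT.
move: (precT x y) (dotT x y) (succT x y) (precT y z) (dotT y z) (succT y z) (tr x) (tr z).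
move: (lin2 precT) (lin2 dotT) (lin2 succT) => prec dot succ p d s p' d' s' X Z.
move=> succDr dotDr dotDl precDl Edp Edd Esp Esd Epd.
rewrite !precDl !dotDl !dotDr !succDr Edp Edd Esp Esd Epd.
by rewrite [LHS](AC (3*3*1) (1*(2*5*4)*(3*6*7))).
Qed.

End Tridendriform.

Lemma starA_leafl (v : A) : tr Leaf ⋆ v = v.
Proof. by rewrite lin2U (eq_linext star_leafl) linext_tr. Qed.

Lemma starA_leafr (v : A) : v ⋆ tr Leaf = v.
Proof. by rewrite lin2_U (eq_linext star_leafr) linext_tr. Qed.

Lemma star_assoc x y z : star x y ⋆ tr z = tr x ⋆ star y z.
Proof.
move: {2}(tsize x + tsize y + tsize z)%N (leqnn (tsize x + tsize y + tsize z)) => n.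
elim: n x y z => [|n IH] [|x0 x1 xs] [|y0 y1 ys] [|z0 z1 zs] //;
  rewrite ?star_leafl ?star_leafr ?starA_leafl ?starA_leafr ?lin2UU //.
have := tsize_last x1 xs; rewrite !tsizeE => ? ?.
by apply: star_assoc_node; apply: IH; rewrite ?tsizeE; lia.
Qed.

Lemma starA_assoc (u v w : A) : u ⋆ v ⋆ w = u ⋆ (v ⋆ w).
Proof.
have starA_trA a b : star a b ⋆ w = tr a ⋆ (tr b ⋆ w).
  rewrite -[w]linext_tr lin2_linextr (lin2_linextr _ tr (tr b)) lin2_linextr.
  by apply: eq_linext => c; rewrite !lin2UU star_assoc.
rewrite -[u]linext_tr !lin2_linextl; apply: eq_linext => a.
rewrite -[v]linext_tr lin2_linextr !lin2_linextl lin2_linextr.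
by apply: eq_linext => b; rewrite lin2UU.
Qed.

Lemma star_list_cat g1 g2 : star_list K (g1 ++ g2) = star_list K g1 ⋆ star_list K g2.
Proof.
elim: g1 => [|g g1 IH] /=; first by rewrite starA_leafl.
by rewrite IH /starA starA_assoc.
Qed.

End Star.

Section Coproduct.
Variable K : fieldType.
Local Notation A := (A K).
Local Notation AA := (AA K).
Local Notation tr := (tr K).
Local Notation star := (star K).
Local Notation Delta := (Delta K).
Local Notation "x ⋆ y" := (lin2 star x y) (at level 40, left associativity).

Lemma tensE (x y : A) : tens x y = linext2 (fun a b => << (a, b) >>) x y.
Proof.
rewrite /tens /linext2 /linext; apply: eq_bigr => a _; rewrite scaler_sumr.
by apply: eq_bigr => b _; rewrite scalerA.
Qed.

Lemma tens_tr (x : A) b : tens x (tr b) = linext (fun a => << (a, b) >>) x.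
Proof. by rewrite tensE linext2_U. Qed.

Definition graft_tens (w v : AA) : AA :=
  linext2 (fun k l => tens (star k.1 l.1) (tr (Node k.2 l.2 [::]))) w v.

HB.instance Definition _ w :=
  GRing.isLinear.Build K AA AA *:%R (graft_tens w) (linext2_is_linear _ w).

Lemma graft_tens_suml (I : Type) (s : seq I) (u : I -> AA) v :
  graft_tens (\sum_(i <- s) u i) v = \sum_(i <- s) graft_tens (u i) v.
Proof. exact: linext2_suml. Qed.

Lemma graft_tens_tr (x z : A) s r :
  graft_tens (tens x (tr s)) (tens z (tr r)) = tens (x ⋆ z) (tr (Node s r [::])).
Proof.
rewrite !tens_tr /graft_tens linext2_linextl lin2E [linext2 _ x z]/linext2.
rewrite [RHS]linext_linext; apply: eq_linext => a.
rewrite linext2_linextr [RHS]linext_linext.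
by apply: eq_linext => c; rewrite linext2UU tens_tr.
Qed.

Definition child_cuts (c : tree) : seq (seq tree * tree) :=
  (if c is Leaf then [::] else [:: ([:: c], Leaf)]) ++ cuts c.

Lemma cuts_node2 a b (F : seq tree * tree -> AA) :
  \sum_(c <- cuts (Node a b [::])) F c =
  \sum_(p <- child_cuts a) \sum_(q <- child_cuts b) F (p.1 ++ q.1, Node p.2 q.2 [::]).
Proof.
rewrite /= big_map big_flatten big_map; apply: eq_bigr => p _.
rewrite big_map big_flatten big_map; apply: eq_bigr => q _.
by rewrite big_seq1 /= cats0.
Qed.

Lemma Delta_child_cuts c :
  \sum_(p <- child_cuts c) tens (star_list K p.1) (tr p.2) = Delta c.
Proof.
case: c => [|c0 c1 cs]; first by rewrite big_seq1.
by rewrite big_cat big_seq1 /= addrC /starA lin2UU star_leafr.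
Qed.

Lemma Delta_node2 a b : Delta (Node a b [::]) =
  graft_tens (Delta a) (Delta b) + tens (tr (Node a b [::])) (tr Leaf).
Proof.
rewrite {1}/Defs.Delta cuts_node2 -!Delta_child_cuts graft_tens_suml; congr (_ + _).
apply: eq_bigr => p _; rewrite linear_sum; apply: eq_bigr => q _.
by rewrite star_list_cat -graft_tens_tr.
Qed.

Lemma DeltaLR_node t1 t2 : DeltaLR K (BNode t1 t2) =
  graft_tens (DeltaLR K t1) (DeltaLR K t2) + tens (tr (emb (BNode t1 t2))) (tr Leaf).
Proof.
rewrite {1}/DeltaLR /= big_cat big_seq1 /DeltaLR graft_tens_suml; congr (_ + _).
rewrite big_flatten big_map; apply: eq_bigr => p _; rewrite linear_sum big_map.
by apply: eq_bigr => q _; rewrite -graft_tens_tr.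
Qed.

Lemma Delta_emb t : Delta (emb t) = DeltaLR K t.
Proof.
elim: t => [|t1 IH1 t2 IH2]; first by rewrite /DeltaLR big_seq1.
by rewrite DeltaLR_node -IH1 -IH2 -Delta_node2.
Qed.

End Coproduct.

Theorem mainTheorem19 (K : fieldType) (t : btree) :
  Iker (Delta K (emb t) - DeltaLR K t)%R.
Proof. by rewrite Delta_emb subrr => J [J0 _] _ _. Qed.
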